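(* Let $X$ be a complete CAT(0) space, $f:X\to(-\infty,\infty]$ a proper, convex, lower semicontinuous function, $C\subseteq X$ nonempty, and $\psi:[0,\infty)\to[0,\infty)$ an increasing function vanishing only at $0$. Assume $f$ is uniformly convex on $C$ with modulus $\psi$, and let $\gamma>0$ be such that $J_\gamma(C)\subseteq C$. Then: (1) for all $u,v\in C$, $d^2(J_\gamma u,v)\le d^2(u,v)-d^2(u,J_\gamma u)-2\gamma(f(J_\gamma u)-f(v))-2\gamma\psi(d(v,J_\gamma u))$; (2) for all $x,y\in C$, $d^2(J_\gamma x,J_\gamma y)\le d^2(x,y)-4\gamma\psi(d(J_\gamma x,J_\gamma y))$.
   Context: A geodesic space $(X,d)$ is CAT(0) if for all $z\in X$, all geodesics $\gamma:[a,b]\to X$ and all $t\in[0,1]$, $d^2(z,\gamma((1-t)a+tb))\le(1-t)d^2(z,\gamma(a))+td^2(z,\gamma(b))-t(1-t)d^2(\gamma(a),\gamma(b))$; $(1-t)x+ty$ denotes the point at distance $t\,d(x,y)$ from $x$ on the unique geodesic from $x$ to $y$. $J_\gamma(x):=\arg\min_{y\in X}\left[f(y)+\frac1{2\gamma}d^2(x,y)\right]$ (exists uniquely). $f$ is uniformly convex on $C$ with modulus $\psi$ if for all $x,y\in C$, $t\in[0,1]$: $f((1-t)x+ty)\le(1-t)f(x)+tf(y)-t(1-t)\psi(d(x,y))$. *)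

From Stdlib Require Import Reals.
From Coquelicot Require Import Rbar.
Open Scope R_scope.

Section Defs.
Variable X : Type.
Variable d : X -> X -> R.

Definition is_metric : Prop :=
  (forall x y, 0 <= d x y) /\ (forall x y, d x y = 0 <-> x = y) /\
  (forall x y, d x y = d y x) /\ (forall x y z, d x z <= d x y + d y z).

Definition complete_metric : Prop :=
  forall u : nat -> X,
    (forall eps, 0 < eps -> exists N, forall m n, (N <= m)%nat -> (N <= n)%nat ->
        d (u m) (u n) < eps) ->
    exists l, forall eps, 0 < eps -> exists N, forall n, (N <= n)%nat -> d (u n) l < eps.

Definition is_geodesic (c : R -> X) (a b : R) : Prop :=
  a <= b /\ forall s s', a <= s <= b -> a <= s' <= b -> d (c s) (c s') = Rabs (s - s').

Definition geodesic_space : Prop :=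
  forall x y, exists c a b, is_geodesic c a b /\ c a = x /\ c b = y.

Definition CAT0 : Prop :=
  geodesic_space /\
  forall (z : X) (c : R -> X) (a b t : R), is_geodesic c a b -> 0 <= t <= 1 ->
    (d z (c ((1 - t) * a + t * b))) ^ 2 <=
      (1 - t) * (d z (c a)) ^ 2 + t * (d z (c b)) ^ 2
      - t * (1 - t) * (d (c a) (c b)) ^ 2.

(* geo_pt x y t p : p is the point (1-t)x + t y, i.e. the point at distance
   t d(x,y) from x on the (unique, in CAT(0)) geodesic from x to y *)
Definition geo_pt (x y : X) (t : R) (p : X) : Prop :=
  exists c : R -> X, is_geodesic c 0 (d x y) /\ c 0 = x /\ c (d x y) = y /\
    p = c (t * d x y).

Variable f : X -> Rbar.

Definition proper_fun : Prop :=
  (forall x, f x <> m_infty) /\ exists x, f x <> p_infty.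

Definition convex_fun : Prop :=
  forall x y t p, 0 <= t <= 1 -> geo_pt x y t p ->
    Rbar_le (f p) (Rbar_plus (Rbar_mult (1 - t) (f x)) (Rbar_mult t (f y))).

Definition lsc_fun : Prop :=
  forall x (r : R), Rbar_lt r (f x) ->
    exists eps, 0 < eps /\ forall y, d x y < eps -> Rbar_lt r (f y).

Definition uniformly_convex_on (C : X -> Prop) (psi : R -> R) : Prop :=
  forall x y t p, C x -> C y -> 0 <= t <= 1 -> geo_pt x y t p ->
    Rbar_le (f p)
      (Rbar_minus (Rbar_plus (Rbar_mult (1 - t) (f x)) (Rbar_mult t (f y)))
                  (Finite (t * (1 - t) * psi (d x y)))).

Definition is_resolvent (gamma : R) (x p : X) : Prop :=
  forall y, Rbar_le (Rbar_plus (f p) (Finite ((d x p) ^ 2 / (2 * gamma))))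
                    (Rbar_plus (f y) (Finite ((d x y) ^ 2 / (2 * gamma)))).
End Defs.

Definition modulus (psi : R -> R) : Prop :=
  (forall t, 0 <= t -> 0 <= psi t) /\
  (forall s t, 0 <= s -> s <= t -> psi s <= psi t) /\
  (forall t, 0 <= t -> (psi t = 0 <-> t = 0)).

Arguments is_metric {X}. Arguments complete_metric {X}. Arguments is_geodesic {X}.
Arguments geodesic_space {X}. Arguments CAT0 {X}. Arguments geo_pt {X}.
Arguments proper_fun {X}. Arguments convex_fun {X}. Arguments lsc_fun {X}.
Arguments uniformly_convex_on {X}. Arguments is_resolvent {X}.

(* Compare the resolvent point p = J u with the points q_t = (1-t) p + t v
   of the geodesic towards v.  Minimality of p, uniform convexity of f along
   [p, v] and the CAT(0) inequality for d(u, q_t) give, after dividing by t,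
   a bound that is affine in t; letting t -> 0 yields (1).  Adding (1) for
   (x, J y) and (y, J x) and using the CAT(0) quadrilateral inequality
   yields (2).  Completeness, convexity and lower semicontinuity of f only
   serve to make J exist, which is assumed here. *)

From Stdlib Require Import Reals Lra Psatz.
From Coquelicot Require Import Rbar.
Open Scope R_scope.

Lemma Rle_of_le_plus_small (A B K : R) :
  (forall t, 0 < t <= 1 -> A <= B + t * K) -> A <= B.
Proof.
  intros H. destruct (Rle_or_lt A B) as [HAB | HAB]; [exact HAB | exfalso].
  set (del := A - B).
  assert (Hdel : 0 < del) by (unfold del; lra).
  pose proof (Rabs_pos K) as HK.
  (* chosen so that t * |K| = del - t * del < del *)
  set (t := del / (del + Rabs K)).
  assert (Ht : t * (del + Rabs K) = del) by (unfold t; field; lra).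
  assert (Ht0 : 0 < t) by (unfold t; apply Rdiv_lt_0_compat; lra).
  assert (Ht1 : t <= 1) by nra.
  assert (t * K <= t * Rabs K) by (apply Rmult_le_compat_l; [lra | apply Rle_abs]).
  specialize (H t (conj Ht0 Ht1)).
  unfold del in *. nra.
Qed.

Section CAT0_geometry.
Context {X : Type} {d : X -> X -> R}.

Lemma geodesic_space_geo_pt (Hgeo : geodesic_space d) (x y : X) (t : R) :
  exists p, geo_pt d x y t p.
Proof.
  destruct (Hgeo x y) as [c [a [b [[Hab Hc] [Ha Hb]]]]].
  assert (Hxy : d x y = b - a).
  { rewrite <- Ha, <- Hb, Hc by lra. rewrite Rabs_minus_sym. apply Rabs_right. lra. }
  exists (c (a + t * d x y)), (fun s => c (a + s)). rewrite Hxy.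
  repeat split.
  - lra.
  - intros s s' Hs Hs'. rewrite Hc by lra. f_equal. ring.
  - rewrite Rplus_0_r. exact Ha.
  - replace (a + (b - a)) with b by ring. exact Hb.
Qed.

Lemma CAT0_geo_pt_le (Hcat : CAT0 d) (x y z p : X) (t : R) :
  0 <= t <= 1 -> geo_pt d x y t p ->
  d z p ^ 2 <= (1 - t) * d z x ^ 2 + t * d z y ^ 2 - t * (1 - t) * d x y ^ 2.
Proof.
  intros Ht [c [Hc [H0 [H1 ->]]]].
  pose proof (proj2 Hcat z c 0 (d x y) t Hc Ht) as H.
  replace ((1 - t) * 0 + t * d x y) with (t * d x y) in H by ring.
  rewrite H0, H1 in H. exact H.
Qed.

Lemma CAT0_quadrilateral (Hmet : is_metric d) (Hcat : CAT0 d) (a b c e : X) :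
  d a c ^ 2 + d b e ^ 2 <= d a b ^ 2 + d b c ^ 2 + d c e ^ 2 + d e a ^ 2.
Proof.
  destruct Hmet as [Hpos [_ [Hsym Htri]]].
  destruct (geodesic_space_geo_pt (proj1 Hcat) b e (/ 2)) as [m Hm].
  assert (Hhalf : 0 <= / 2 <= 1) by lra.
  pose proof (CAT0_geo_pt_le Hcat b e a m (/ 2) Hhalf Hm) as Ham.
  pose proof (CAT0_geo_pt_le Hcat b e c m (/ 2) Hhalf Hm) as Hcm.
  assert (Hac : d a c <= d a m + d c m) by (rewrite (Hsym c m); apply Htri).
  assert (Hac2 : d a c ^ 2 <= 2 * (d a m ^ 2 + d c m ^ 2)).
  { assert (d a c ^ 2 <= (d a m + d c m) ^ 2) by (apply pow_incr; split; [apply Hpos | exact Hac]).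
    pose proof (pow2_ge_0 (d a m - d c m)). nra. }
  rewrite (Hsym e a), (Hsym b c). lra.
Qed.

End CAT0_geometry.

Section Resolvent.
Context {X : Type} {d : X -> X -> R} {f : X -> Rbar} {gamma : R}.

Lemma resolvent_value_finite (x p : X) :
  proper_fun f -> is_resolvent d f gamma x p -> exists r, f p = Finite r.
Proof.
  intros [Hnot_minfty [y Hy]] Hp. specialize (Hp y).
  destruct (f p) as [r | |] eqn:Hfp.
  - exists r. reflexivity.
  - destruct (f y); simpl in Hp; tauto || congruence.
  - exfalso. exact (Hnot_minfty p Hfp).
Qed.

Lemma resolvent_le (u p q : X) (fp fq : R) :
  0 < gamma -> is_resolvent d f gamma u p -> f p = Finite fp -> f q = Finite fq ->
  2 * gamma * fp + d u p ^ 2 <= 2 * gamma * fq + d u q ^ 2.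
Proof.
  intros Hgamma Hp Hfp Hfq. specialize (Hp q). rewrite Hfp, Hfq in Hp. simpl in Hp.
  apply Rmult_le_compat_l with (r := 2 * gamma) in Hp; [|lra].
  replace (2 * gamma * (fp + d u p * (d u p * 1) / (2 * gamma)))
    with (2 * gamma * fp + d u p ^ 2) in Hp by (field; lra).
  replace (2 * gamma * (fq + d u q * (d u q * 1) / (2 * gamma)))
    with (2 * gamma * fq + d u q ^ 2) in Hp by (field; lra).
  exact Hp.
Qed.

Context {C : X -> Prop} {psi : R -> R}.

Lemma uniformly_convex_on_geo_pt (x y p : X) (t a b : R) :
  uniformly_convex_on d f C psi -> (forall z, f z <> m_infty) ->
  C x -> C y -> 0 <= t <= 1 -> geo_pt d x y t p ->
  f x = Finite a -> f y = Finite b ->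
  exists c, f p = Finite c /\ c <= (1 - t) * a + t * b - t * (1 - t) * psi (d x y).
Proof.
  intros Hunif Hnot_minfty Cx Cy Ht Hp Ha Hb.
  pose proof (Hunif x y t p Cx Cy Ht Hp) as H. rewrite Ha, Hb in H.
  destruct (f p) as [c | |] eqn:Hfp.
  - exists c. split; [reflexivity | simpl in H; lra].
  - contradiction.
  - exfalso. exact (Hnot_minfty p Hfp).
Qed.

Hypotheses (Hcat : CAT0 d) (Hnot_minfty : forall z, f z <> m_infty)
  (Hunif : uniformly_convex_on d f C psi) (Hgamma : 0 < gamma).

Lemma resolvent_variational_ineq (u p v : X) (fp fv : R) :
  is_resolvent d f gamma u p -> C p -> C v -> f p = Finite fp -> f v = Finite fv ->
  d p v ^ 2 <= d u v ^ 2 - d u p ^ 2 - 2 * gamma * psi (d p v) + 2 * gamma * (fv - fp).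
Proof.
  intros Hp Cp Cv Hfp Hfv.
  apply (Rle_of_le_plus_small _ _ (d p v ^ 2 + 2 * gamma * psi (d p v))).
  intros t Ht.
  assert (Ht' : 0 <= t <= 1) by lra.
  destruct (geodesic_space_geo_pt (proj1 Hcat) p v t) as [q Hq].
  destruct (uniformly_convex_on_geo_pt p v q t fp fv Hunif Hnot_minfty
              Cp Cv Ht' Hq Hfp Hfv) as [fq [Hfq Hconv]].
  pose proof (resolvent_le u p q fp fq Hgamma Hp Hfp Hfq) as Hmin.
  pose proof (CAT0_geo_pt_le Hcat p v u q t Ht' Hq) as Hcat_q.
  assert (Hscaled : t * (2 * gamma * fp + d u p ^ 2) <=
    t * (2 * gamma * fv + d u v ^ 2 - (1 - t) * (2 * gamma * psi (d p v) + d p v ^ 2))).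
  { assert (2 * gamma * fq <= 2 * gamma * ((1 - t) * fp + t * fv - t * (1 - t) * psi (d p v)))
      by (apply Rmult_le_compat_l; lra).
    lra. }
  apply Rmult_le_reg_l in Hscaled; lra.
Qed.

Lemma resolvent_variational_ineq_Rbar (u p v : X) :
  is_metric d -> is_resolvent d f gamma u p -> C p -> C v -> f p <> p_infty ->
  Rbar_le (Finite (d p v ^ 2))
    (Rbar_plus (Finite (d u v ^ 2 - d u p ^ 2 - 2 * gamma * psi (d v p)))
       (Rbar_mult (2 * gamma) (Rbar_minus (f v) (f p)))).
Proof.
  intros Hmet Hp Cp Cv Hfp_fin.
  destruct (f p) as [fp | |] eqn:Hfp; [| congruence | exfalso; exact (Hnot_minfty p Hfp)].
  destruct (f v) as [fv | |] eqn:Hfv; [| | exfalso; exact (Hnot_minfty v Hfv)].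
  - simpl. rewrite (proj1 (proj2 (proj2 Hmet)) v p).
    pose proof (resolvent_variational_ineq u p v fp fv Hp Cp Cv Hfp Hfv). lra.
  - assert (Hinfty : Rbar_mult (2 * gamma) (Rbar_minus p_infty fp) = p_infty).
    { rewrite Rbar_mult_comm.
      apply is_Rbar_mult_unique, is_Rbar_mult_p_infty_pos. simpl. lra. }
    rewrite Hinfty. exact I.
Qed.

End Resolvent.

Theorem lemma4p6 (X : Type) (d : X -> X -> R) (f : X -> Rbar)
  (C : X -> Prop) (psi : R -> R) (gamma : R) (J : X -> X)
  (Hmet : is_metric d) (Hcomp : complete_metric d) (Hcat : CAT0 d)
  (Hproper : proper_fun f) (Hconv : convex_fun d f) (Hlsc : lsc_fun d f)
  (HCne : exists x, C x) (Hpsi : modulus psi)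
  (Hunif : uniformly_convex_on d f C psi)
  (Hgamma : 0 < gamma)
  (HJ : forall x, is_resolvent d f gamma x (J x))
  (HJC : forall x, C x -> C (J x)) :
  (forall u v, C u -> C v ->
     Rbar_le (Finite ((d (J u) v) ^ 2))
       (Rbar_plus
          (Finite ((d u v) ^ 2 - (d u (J u)) ^ 2 - 2 * gamma * psi (d v (J u))))
          (Rbar_mult (2 * gamma) (Rbar_minus (f v) (f (J u)))))) /\
  (forall x y, C x -> C y ->
     (d (J x) (J y)) ^ 2 <= (d x y) ^ 2 - 4 * gamma * psi (d (J x) (J y))).
Proof.
  pose proof (proj1 Hproper) as Hnot_minfty.
  assert (Hfin : forall x, exists r, f (J x) = Finite r)
    by (intros x; exact (resolvent_value_finite x (J x) Hproper (HJ x))).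
  split.
  - intros u v Cu Cv. destruct (Hfin u) as [r Hr].
    apply (resolvent_variational_ineq_Rbar Hcat Hnot_minfty Hunif Hgamma); auto.
    rewrite Hr. discriminate.
  - intros x y Cx Cy.
    destruct (Hfin x) as [a Ha], (Hfin y) as [b Hb].
    pose proof (resolvent_variational_ineq Hcat Hnot_minfty Hunif Hgamma
                  x (J x) (J y) a b (HJ x) (HJC x Cx) (HJC y Cy) Ha Hb) as Hx.
    pose proof (resolvent_variational_ineq Hcat Hnot_minfty Hunif Hgamma
                  y (J y) (J x) b a (HJ y) (HJC y Cy) (HJC x Cx) Hb Ha) as Hy.
    pose proof (CAT0_quadrilateral Hmet Hcat x y (J y) (J x)) as Hquad.
    destruct Hmet as [_ [_ [Hsym _]]].
    rewrite (Hsym (J y) (J x)) in Hy, Hquad. rewrite (Hsym (J x) x) in Hquad.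
    lra.
Qed.
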